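(* Let $\mathcal{T}$ be an infinite set of theories of the form $T_I$ ($I$ an index set), and let $J$ be an index set with $T_J\notin\mathcal{T}$. Then $T_J\in\mathrm{Cl}_E(\mathcal{T})$ if and only if for every finite set $J_0\subset I_0$ there are infinitely many $T_I\in\mathcal{T}$ with $J\cap J_0=I\cap J_0$.
   Context: A predicate symbol $R$ is non-empty for a theory $T$ if $T\vdash\exists\bar x R(\bar x)$, empty otherwise. A complete theory $T$ in a predicate language is language uniform (LU) if for each arity $m$, every permutation of the set of $m$-ary symbols non-empty for $T$ preserves $T$. Let $T_0$ be a complete LU-theory in a relational language $\Sigma_0$, let $n\ge1$, and let $\{R_k\mid k\in I_0\}$, $I_0$ infinite, be the set of $n$-ary symbols of $\Sigma_0$ that are non-empty for $T_0$. Let $\Sigma'=\{R_k\mid k\in I_0\}\cup\{$symbols of $\Sigma_0$ of arity $\neq n\}$. An index set is an infinite $I\subseteq I_0$ with $|I|=|I_0|$ and $|I_0\setminus I|$ equal to the number of $n$-ary symbols of $\Sigma_0$ that are empty for $T_0$. For an index set $I$, $T_I$ is the complete $\Sigma'$-theory axiomatized by the restriction of $T_0$ to the language $\{R_k\mid k\in I\}\cup\{$symbols of arity $\ne n\}$ together with $\{\forall\bar x\neg R_l(\bar x)\mid l\in I_0\setminus I\}$. $E$-closure (over the language $\Sigma'$): let $E$ be a new binary symbol. The $E$-combination of a family $(\mathcal{A}_i)_{i}$ of $\Sigma'$-structures with disjoint universes is the $(\Sigma'\cup\{E\})$-structure on $\bigcup_iA_i$ with $E$ the equivalence relation whose classes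 are the $A_i$ and each $R\in\Sigma'$ interpreted as $\bigcup_iR^{\mathcal{A}_i}$. For a set $\mathcal{T}$ of complete $\Sigma'$-theories, $\mathrm{Cl}_E(\mathcal{T})$ is the set of complete theories of the $E$-classes (as induced $\Sigma'$-structures) of structures $\mathcal{A}'$ elementarily equivalent to some $E$-combination of structures whose theories lie in $\mathcal{T}$. *)

From Stdlib Require Import List Arith.
Import ListNotations.
Set Implicit Arguments.

(** The arity of symbols is given
      separately by [ar : Sym -> nat]; an atom [FRel s v] stands for
      R_s(x_{v 0}, ..., x_{v (ar s - 1)}). *)
Inductive form (Sym : Type) : Type :=
| FFal
| FRel (s : Sym) (v : nat -> nat)
| FEq (x y : nat)
| FNeg (p : form Sym)
| FAnd (p q : form Sym)
| FOr (p q : form Sym)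
| FImp (p q : form Sym)
| FAll (x : nat) (p : form Sym)
| FEx (x : nat) (p : form Sym).
Arguments FFal {Sym}.
Arguments FEq {Sym} x y.

Fixpoint free (Sym : Type) (ar : Sym -> nat) (x : nat) (p : form Sym) : Prop :=
  match p with
  | FFal => False
  | FRel s v => exists i, i < ar s /\ v i = x
  | FEq y z => x = y \/ x = z
  | FNeg q => free ar x q
  | FAnd q r | FOr q r | FImp q r => free ar x q \/ free ar x r
  | FAll y q | FEx y q => x <> y /\ free ar x q
  end.

Definition sentence (Sym : Type) (ar : Sym -> nat) (p : form Sym) : Prop :=
  forall x, ~ free ar x p.

Fixpoint uses (Sym : Type) (L : Sym -> Prop) (p : form Sym) : Prop :=
  match p with
  | FFal | FEq _ _ => True
  | FRel s _ => L s
  | FNeg q | FAll _ q | FEx _ q => uses L q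
  | FAnd q r | FOr q r | FImp q r => uses L q /\ uses L r
  end.

Fixpoint rename (Sym : Type) (f : Sym -> Sym) (p : form Sym) : form Sym :=
  match p with
  | FFal => FFal
  | FRel s v => FRel (f s) v
  | FEq x y => FEq x y
  | FNeg q => FNeg (rename f q)
  | FAnd q r => FAnd (rename f q) (rename f r)
  | FOr q r => FOr (rename f q) (rename f r)
  | FImp q r => FImp (rename f q) (rename f r)
  | FAll x q => FAll x (rename f q)
  | FEx x q => FEx x (rename f q)
  end.

Fixpoint exs (Sym : Type) (k : nat) (p : form Sym) : form Sym :=
  match k with 0 => p | S k' => FEx k' (exs k' p) end.
Fixpoint alls (Sym : Type) (k : nat) (p : form Sym) : form Sym :=
  match k with 0 => p | S k' => FAll k' (alls k' p) end.

Definition atomR (Sym : Type) (s : Sym) : form Sym := FRel s (fun i => i).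

(** * Semantics: structures have a nonempty universe; each symbol is
      interpreted as a set of lists (only lists of length [ar s] matter). *)
Record structure (Sym : Type) : Type := {
  dom : Type;
  dom_ne : inhabited dom;
  rel : Sym -> list dom -> Prop
}.

Definition upd (D : Type) (a : nat -> D) (x : nat) (d : D) : nat -> D :=
  fun y => if Nat.eqb y x then d else a y.

Fixpoint sat (Sym : Type) (ar : Sym -> nat) (M : structure Sym)
  (a : nat -> dom M) (p : form Sym) : Prop :=
  match p with
  | FFal => False
  | FRel s v => rel M s (map (fun i => a (v i)) (seq 0 (ar s)))
  | FEq x y => a x = a y
  | FNeg q => ~ sat ar M a q
  | FAnd q r => sat ar M a q /\ sat ar M a r
  | FOr q r => sat ar M a q \/ sat ar M a r
  | FImp q r => sat ar M a q -> sat ar M a r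
  | FAll x q => forall d, sat ar M (upd a x d) q
  | FEx x q => exists d, sat ar M (upd a x d) q
  end.

Definition models (Sym : Type) (ar : Sym -> nat) (M : structure Sym)
  (p : form Sym) : Prop := forall a, sat ar M a p.

Definition theory (Sym : Type) := form Sym -> Prop.

Definition Th (Sym : Type) (ar : Sym -> nat) (L : Sym -> Prop)
  (M : structure Sym) : theory Sym :=
  fun p => sentence ar p /\ uses L p /\ models ar M p.

Definition theq (Sym : Type) (T1 T2 : theory Sym) : Prop :=
  forall p, T1 p <-> T2 p.

Definition memT (Sym : Type) (TT : theory Sym -> Prop) (T : theory Sym) : Prop :=
  exists T', TT T' /\ theq T T'.

Definition nonempty_for (Sym : Type) (ar : Sym -> nat) (T : theory Sym)
  (s : Sym) : Prop := T (exs (ar s) (atomR s)).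

Definition bij (A B : Type) (f : A -> B) : Prop :=
  exists g : B -> A, (forall x, g (f x) = x) /\ (forall y, f (g y) = y).

Definition LU (Sym : Type) (ar : Sym -> nat) (T : theory Sym) : Prop :=
  forall (m : nat) (sigma : Sym -> Sym),
    bij sigma ->
    (forall s, ar s = m /\ nonempty_for ar T s ->
               ar (sigma s) = m /\ nonempty_for ar T (sigma s)) ->
    (forall s, ~ (ar s = m /\ nonempty_for ar T s) -> sigma s = s) ->
    forall p, T p <-> T (rename sigma p).

Definition finite_set (A : Type) (P : A -> Prop) : Prop :=
  exists l : list A, forall x, P x -> In x l.
Definition infinite_set (A : Type) (P : A -> Prop) : Prop := ~ finite_set P.
Definition equipotent (A B : Type) (P : A -> Prop) (Q : B -> Prop) : Prop :=
  exists f : {x | P x} -> {y | Q y}, bij f.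

Definition T0 (Sym : Type) (ar : Sym -> nat) (M0 : structure Sym) : theory Sym :=
  Th ar (fun _ => True) M0.

Definition I0 (Sym : Type) (ar : Sym -> nat) (M0 : structure Sym) (n : nat)
  (s : Sym) : Prop := ar s = n /\ nonempty_for ar (T0 ar M0) s.

Definition emptyN (Sym : Type) (ar : Sym -> nat) (M0 : structure Sym) (n : nat)
  (s : Sym) : Prop := ar s = n /\ ~ nonempty_for ar (T0 ar M0) s.

Definition Sigma' (Sym : Type) (ar : Sym -> nat) (M0 : structure Sym) (n : nat)
  (s : Sym) : Prop := I0 ar M0 n s \/ ar s <> n.

Definition index_set (Sym : Type) (ar : Sym -> nat) (M0 : structure Sym) (n : nat)
  (I : Sym -> Prop) : Prop :=
  (forall s, I s -> I0 ar M0 n s) /\ infinite_set I /\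
  equipotent I (I0 ar M0 n) /\
  equipotent (fun s => I0 ar M0 n s /\ ~ I s) (emptyN ar M0 n).

Definition T_I (Sym : Type) (ar : Sym -> nat) (M0 : structure Sym) (n : nat)
  (I : Sym -> Prop) : theory Sym :=
  fun p => sentence ar p /\ uses (Sigma' ar M0 n) p /\
    forall M : structure Sym,
      (forall q, T0 ar M0 q -> uses (fun s => I s \/ ar s <> n) q -> models ar M q) ->
      (forall l, I0 ar M0 n l -> ~ I l -> models ar M (alls (ar l) (FNeg (atomR l)))) ->
      models ar M p.

(** * E-combinations. The language Σ' ∪ {E} is [option Sym], [None] = E. *)
Definition arE (Sym : Type) (ar : Sym -> nat) (o : option Sym) : nat :=
  match o with None => 2 | Some s => ar s end.

Definition LE (Sym : Type) (L : Sym -> Prop) (o : option Sym) : Prop :=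
  match o with None => True | Some s => L s end.

Definition comb_pt (K : Type) (Sym : Type) (A : K -> structure Sym)
  (hK : inhabited K) : inhabited {i : K & dom (A i)} :=
  match hK with
  | inhabits i => match dom_ne (A i) with inhabits x => inhabits (existT _ i x) end
  end.

Definition comb (K : Type) (Sym : Type) (A : K -> structure Sym)
  (hK : inhabited K) : structure (option Sym) :=
  {| dom := {i : K & dom (A i)};
     dom_ne := comb_pt A hK;
     rel := fun o l =>
       match o with
       | None => match l with
                 | [x; y] => projT1 x = projT1 y
                 | _ => False
                 end
       | Some s => exists i (l' : list (dom (A i))),
                     l = map (existT _ i) l' /\ rel (A i) s l'
       end |}.

Definition eclass (Sym : Type) (B : structure (option Sym)) (a : dom B)
  (h : rel B None [a; a]) : structure Sym :=
  {| dom := {x : dom B | rel B None [a; x]};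
     dom_ne := inhabits (exist _ a h);
     rel := fun s l => rel B (Some s) (map (@proj1_sig _ _) l) |}.

Definition elem_equiv (Sym : Type) (ar : Sym -> nat) (L : Sym -> Prop)
  (M N : structure Sym) : Prop :=
  forall p, sentence ar p -> uses L p -> (models ar M p <-> models ar N p).

Definition ClE (Sym : Type) (ar : Sym -> nat) (M0 : structure Sym) (n : nat)
  (TT : theory Sym -> Prop) (T : theory Sym) : Prop :=
  exists (K : Type) (hK : inhabited K) (A : K -> structure Sym)
         (B : structure (option Sym)),
    (forall i, memT TT (Th ar (Sigma' ar M0 n) (A i))) /\
    elem_equiv (arE ar) (LE (Sigma' ar M0 n)) (comb A hK) B /\
    exists (a : dom B) (h : rel B None [a; a]),
      theq T (Th ar (Sigma' ar M0 n) (eclass B a h)).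

Definition infinitely_many (Sym : Type) (TT : theory Sym -> Prop)
  (P : theory Sym -> Prop) : Prop :=
  forall l : list (theory Sym),
    exists T, TT T /\ P T /\ forall T', In T' l -> ~ theq T T'.

(* [T_I] is the complete theory of [M0] with the symbols of [I0 \ I] made empty, and
   in a model of [T_I] the sentence [exists x, R_k(x)] holds iff [k] is in [I].

   If [T_J] is the theory of an [E]-class of a model [B] of the theory of an
   [E]-combination, every sentence true in that class holds, relativized to some
   [E]-class, in [B], hence in the combination, hence in one of its components.
   Take the conjunction of sentences fixing [exists x, R_k(x)] for [k] in [J0] as in
   [T_J] and of sentences separating [T_J] from finitely many given theories: since
   [T_J] is not in the family, the component realizing it is a new [T_I] agreeing with
   [J] on [J0].

   Conversely, choose for each finite [S] some [I_S] from the family agreeing with [J]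
   on [S], and combine countably many copies of the canonical models of all [T_(I_S)].
   Adding one class with theory [T_J] does not change the theory of the combination:
   a sentence mentions only finitely many symbols [S], and on these the new class is
   one more copy of the model of [T_(I_S)]. *)

From Stdlib Require Import List Arith Lia ClassicalEpsilon ProofIrrelevance Eqdep.
Import ListNotations.
Set Implicit Arguments.
Unset Strict Implicit.

Lemma list_choice (A B : Type) (P : A -> B -> Prop) (l : list A) :
  (forall x, In x l -> exists y, P x y) ->
  exists ys, (forall x, In x l -> exists y, In y ys /\ P x y) /\
             (forall y, In y ys -> exists x, In x l /\ P x y).
Proof.
  induction l as [|x l IH]; intros Hl.
  - exists []; split; intros _ [].
  - destruct (Hl x (or_introl eq_refl)) as [y Hy].
    destruct IH as [ys [Hys Hys']]; [intros x' Hx'; apply Hl; right; exact Hx'|].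
    exists (y :: ys); split.
    + intros x' [<-|Hx']; [exists y; split; [left|]; auto|].
      destruct (Hys x' Hx') as [y' [Hy' HP]]; exists y'; split; [right|]; auto.
    + intros y' [<-|Hy']; [exists x; split; [left|]; auto|].
      destruct (Hys' y' Hy') as [x' [Hx' HP]]; exists x'; split; [right|]; auto.
Qed.

Lemma upd_eq (D : Type) (a : nat -> D) x d : upd a x d x = d.
Proof. unfold upd; now rewrite Nat.eqb_refl. Qed.

Lemma upd_neq (D : Type) (a : nat -> D) x y d : y <> x -> upd a x d y = a y.
Proof. intros Hyx; unfold upd; now rewrite (proj2 (Nat.eqb_neq _ _) Hyx). Qed.

Lemma upd_pointwise (D E : Type) (R : D -> E -> Prop) (P : nat -> Prop)
  (a : nat -> D) (b : nat -> E) x d e :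
  (forall y, y <> x -> P y -> R (a y) (b y)) -> R d e ->
  forall y, P y -> R (upd a x d y) (upd b x e y).
Proof. intros Hab Hde y Hy; unfold upd; destruct (Nat.eqb_spec y x); auto. Qed.

Lemma uses_mono (Sym : Type) (L L' : Sym -> Prop) p :
  (forall s, L s -> L' s) -> uses L p -> uses L' p.
Proof. induction p; simpl; intuition. Qed.

Lemma uses_all (Sym : Type) (p : form Sym) : uses (fun _ => True) p.
Proof. induction p; simpl; auto. Qed.

Lemma uses_exs (Sym : Type) (L : Sym -> Prop) q k : uses L (exs k q) = uses L q.
Proof. induction k; simpl; auto. Qed.

Lemma uses_alls (Sym : Type) (L : Sym -> Prop) q k : uses L (alls k q) = uses L q.
Proof. induction k; simpl; auto. Qed.

Section Semantics.

Variables (Sym : Type) (ar : Sym -> nat).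

Lemma sat_ext (M : structure Sym) p : forall a b,
  (forall x, free ar x p -> a x = b x) -> (sat ar M a p <-> sat ar M b p).
Proof.
  induction p as [|s v|x y|p IH|p IHp q IHq|p IHp q IHq|p IHp q IHq|x p IH|x p IH];
    simpl; intros a b Hab;
    try (rewrite (IHp a b), (IHq a b) by (intros; apply Hab; auto); reflexivity).
  - reflexivity.
  - erewrite map_ext_in; [reflexivity|].
    intros i Hi; apply in_seq in Hi; apply Hab; exists i; split; [lia|reflexivity].
  - now rewrite (Hab x), (Hab y) by auto.
  - now rewrite (IH a b Hab).
  - assert (Hd : forall d, sat ar M (upd a x d) p <-> sat ar M (upd b x d) p)
      by (intro d; apply IH, (upd_pointwise (R := eq)); auto).
    split; intros H d; apply Hd, H.
  - assert (Hd : forall d, sat ar M (upd a x d) p <-> sat ar M (upd b x d) p)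
      by (intro d; apply IH, (upd_pointwise (R := eq)); auto).
    split; intros [d H]; exists d; apply Hd, H.
Qed.

Lemma sat_sentence (M : structure Sym) p a b :
  sentence ar p -> sat ar M a p -> sat ar M b p.
Proof. intros Hp; apply sat_ext; intros x Hx; destruct (Hp x Hx). Qed.

Lemma models_FNeg (M : structure Sym) p :
  sentence ar p -> (models ar M (FNeg p) <-> ~ models ar M p).
Proof.
  intros Hp; split.
  - intros Hn Hm; destruct (dom_ne M) as [x]; exact (Hn (fun _ => x) (Hm _)).
  - intros Hn a Ha; apply Hn; intros b; exact (sat_sentence b Hp Ha).
Qed.

Lemma models_nullary (M : structure Sym) s v :
  ar s = 0 -> (models ar M (FRel s v) <-> rel M s []).
Proof.
  intros Hs; unfold models; simpl; rewrite Hs; simpl; split; auto.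
  intros H; destruct (dom_ne M) as [x]; exact (H (fun _ => x)).
Qed.

Section Isomorphism.

Variables (L : Sym -> Prop) (M N : structure Sym) (h : dom M -> dom N).
Hypotheses (h_inj : forall x y, h x = h y -> x = y)
  (h_surj : forall y, exists x, h x = y)
  (h_rel : forall s l, L s -> length l = ar s -> (rel M s l <-> rel N s (map h l))).

Lemma sat_iso p : uses L p ->
  forall a b, (forall x, b x = h (a x)) -> (sat ar M a p <-> sat ar N b p).
Proof.
  induction p as [|s v|x y|p IH|p IHp q IHq|p IHp q IHq|p IHp q IHq|x p IH|x p IH];
    simpl; intros HL a b Hab;
    try (rewrite (IHp (proj1 HL) a b), (IHq (proj2 HL) a b) by auto; reflexivity).
  - reflexivity.
  - rewrite h_rel, map_map by (auto; now rewrite length_map, length_seq).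
    erewrite (map_ext (fun i => b (v i))) by (intros; apply Hab); reflexivity.
  - rewrite !Hab; split; [now intros -> | apply h_inj].
  - now rewrite (IH HL a b Hab).
  - assert (Hd : forall d, sat ar M (upd a x d) p <-> sat ar N (upd b x (h d)) p).
    { intros d; apply IH; auto; intros y.
      apply (upd_pointwise (R := fun u w => w = h u) (P := fun _ => True)); auto. }
    split; intros H d.
    + destruct (h_surj d) as [e <-]; apply Hd, H.
    + apply Hd, H.
  - assert (Hd : forall d, sat ar M (upd a x d) p <-> sat ar N (upd b x (h d)) p).
    { intros d; apply IH; auto; intros y.
      apply (upd_pointwise (R := fun u w => w = h u) (P := fun _ => True)); auto. }
    split; intros [d H].
    + exists (h d); apply Hd, H.
    + destruct (h_surj d) as [e <-]; exists e; apply Hd, H.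
Qed.

Lemma models_iso p : uses L p -> (models ar M p <-> models ar N p).
Proof.
  intros HL; split; intros H a.
  - destruct (choice (fun y x => h x = y) h_surj) as [g Hg].
    apply (sat_iso HL (a := fun x => g (a x))); auto.
  - apply (sat_iso HL (b := fun x => h (a x))); auto.
Qed.

End Isomorphism.

Lemma theq_sym (T1 T2 : theory Sym) : theq T1 T2 -> theq T2 T1.
Proof. intros H p; now rewrite (H p). Qed.

Lemma theq_trans (T1 T2 T3 : theory Sym) : theq T1 T2 -> theq T2 T3 -> theq T1 T3.
Proof. intros H H' p; now rewrite (H p), (H' p). Qed.

Lemma Th_elem_equiv (L : Sym -> Prop) (M N : structure Sym) :
  elem_equiv ar L M N -> theq (Th ar L M) (Th ar L N).
Proof.
  intros HMN p; split; intros (Hs & Hu & Hm); repeat split; auto; apply (HMN p Hs Hu); auto.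
Qed.

Lemma theq_Th_models (L : Sym -> Prop) (N : structure Sym) (T : theory Sym) p :
  theq (Th ar L N) T -> T p -> models ar N p.
Proof. intros H Hp; exact (proj2 (proj2 (proj2 (H p) Hp))). Qed.

Lemma Th_true (L : Sym -> Prop) (M : structure Sym) : Th ar L M (FNeg FFal).
Proof. repeat split; auto; intros x []. Qed.

Lemma Th_incl_theq (L : Sym -> Prop) (M N : structure Sym) :
  (forall p, Th ar L M p -> Th ar L N p) -> theq (Th ar L M) (Th ar L N).
Proof.
  intros Hincl p; split; [apply Hincl|].
  intros (Hs & Hu & HN); repeat split; auto.
  apply NNPP; intros HM.
  destruct (Hincl (FNeg p)) as (_ & _ & Hneg).
  - repeat split; auto; apply models_FNeg; auto.
  - now apply (models_FNeg N Hs) in Hneg.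
Qed.

(* Either some sentence of [Th L M] lies outside [T'], or [Th L M] is contained in
   [T'] and then, being complete, equal to it. *)
Lemma separating_sentence (L : Sym -> Prop) (M : structure Sym) (T' : theory Sym) :
  exists p, Th ar L M p /\
    forall N, theq (Th ar L N) T' -> models ar N p -> theq (Th ar L M) (Th ar L N).
Proof.
  destruct (classic (exists p, Th ar L M p /\ ~ T' p)) as [[p [HMp HT'p]]|Hincl].
  - exists p; split; auto; intros N HN HNp.
    destruct HMp as (Hs & Hu & _); exfalso; apply HT'p, HN; repeat split; auto.
  - exists (FNeg FFal); split; [apply Th_true|]; intros N HN _.
    apply Th_incl_theq; intros p Hp; apply HN, NNPP; intros HT'p; eauto.
Qed.

Lemma deciding_sentence (L : Sym -> Prop) (M : structure Sym) q :
  sentence ar q -> uses L q ->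
  exists p, Th ar L M p /\
    forall N, models ar N p -> (models ar N q <-> models ar M q).
Proof.
  intros Hs Hu; destruct (classic (models ar M q)) as [HM|HM].
  - exists q; repeat split; auto; intros N HN; split; auto.
  - exists (FNeg q); split; [refine (conj Hs (conj Hu _)); apply models_FNeg; auto|].
    intros N HN; apply (models_FNeg N Hs) in HN; tauto.
Qed.

Lemma sat_exs (M : structure Sym) q :
  forall k a, sat ar M a (exs k q) -> exists a', sat ar M a' q.
Proof. induction k; simpl; intros a H; [eauto|]; destruct H as [d H]; eauto. Qed.

Lemma sat_alls (M : structure Sym) q :
  (forall a, sat ar M a q) -> forall k a, sat ar M a (alls k q).
Proof. intros H; induction k; simpl; auto. Qed.

Lemma alls_sat (M : structure Sym) q : forall k a, sat ar M a (alls k q) ->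
  forall a', (forall x, k <= x -> a' x = a x) -> sat ar M a' q.
Proof.
  induction k; simpl; intros a H a' Ha'.
  - apply (sat_ext (a := a') (b := a)); auto; intros x _; apply Ha'; lia.
  - apply (IHk _ (H (a' k))); intros x Hx; unfold upd.
    destruct (Nat.eqb_spec x k); [subst; auto | apply Ha'; lia].
Qed.

Lemma free_exs q x : forall k, free ar x (exs k q) -> free ar x q /\ k <= x.
Proof.
  induction k; simpl; [split; auto; lia|].
  intros [Hx Hf]; destruct (IHk Hf); split; auto; lia.
Qed.

Lemma free_alls q x : forall k, free ar x (alls k q) -> free ar x q /\ k <= x.
Proof.
  induction k; simpl; [split; auto; lia|].
  intros [Hx Hf]; destruct (IHk Hf); split; auto; lia.
Qed.

Lemma sentence_exs_atomR s : sentence ar (exs (ar s) (atomR s)).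
Proof. intros x Hx; apply free_exs in Hx; destruct Hx as [[i [Hi Hx]] Hk]; simpl in *; lia. Qed.

Lemma sentence_alls_neg_atomR s : sentence ar (alls (ar s) (FNeg (atomR s))).
Proof. intros x Hx; apply free_alls in Hx; destruct Hx as [[i [Hi Hx]] Hk]; simpl in *; lia. Qed.

Fixpoint bigand (ps : list (form Sym)) : form Sym :=
  match ps with [] => FNeg FFal | p :: ps => FAnd p (bigand ps) end.

Lemma sat_bigand (M : structure Sym) a ps :
  sat ar M a (bigand ps) <-> (forall p, In p ps -> sat ar M a p).
Proof.
  induction ps as [|p ps IH]; simpl; [split; auto; intros _ _ []|].
  rewrite IH; split; [intros [Hp Hps] q [<-|Hq]; auto | intros H; split; auto].
Qed.

Lemma Th_bigand (L : Sym -> Prop) (M : structure Sym) ps :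
  (forall p, In p ps -> Th ar L M p) -> Th ar L M (bigand ps).
Proof.
  induction ps as [|p ps IH]; simpl; intros Hps; [apply Th_true|].
  destruct (Hps p (or_introl eq_refl)) as (Hs & Hu & Hm).
  destruct IH as (Hs' & Hu' & Hm'); [auto|].
  repeat split; auto; intros x [Hx|Hx]; [exact (Hs x Hx) | exact (Hs' x Hx)].
Qed.

Lemma models_bigand (M : structure Sym) ps :
  models ar M (bigand ps) -> forall p, In p ps -> models ar M p.
Proof. intros H p Hp a; exact (proj1 (sat_bigand a ps) (H a) p Hp). Qed.

End Semantics.

(** * The theories [T_I] *)

Section IndexTheories.

Variables (Sym : Type) (ar : Sym -> nat) (M0 : structure Sym) (n : nat).

Definition canon_model (I : Sym -> Prop) : structure Sym :=
  {| dom := dom M0; dom_ne := dom_ne M0;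
     rel := fun s l => (I0 ar M0 n s -> I s) /\ rel M0 s l |}.

Lemma canon_model_agrees (I U : Sym -> Prop) p :
  (forall s, U s -> I0 ar M0 n s -> I s) -> uses U p ->
  (models ar M0 p <-> models ar (canon_model I) p).
Proof.
  intros HU Hp; apply (models_iso (L := U) (M := M0) (N := canon_model I) (h := fun x => x)); auto.
  - intros y; exists y; auto.
  - intros s l Hs _; rewrite map_id; simpl; intuition.
Qed.

Fixpoint erase (Z : Sym -> Prop) (p : form Sym) : form Sym :=
  match p with
  | FFal => FFal
  | FRel s v => if excluded_middle_informative (Z s) then FFal else FRel s v
  | FEq x y => FEq x y
  | FNeg q => FNeg (erase Z q)
  | FAnd q r => FAnd (erase Z q) (erase Z r)
  | FOr q r => FOr (erase Z q) (erase Z r)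
  | FImp q r => FImp (erase Z q) (erase Z r)
  | FAll x q => FAll x (erase Z q)
  | FEx x q => FEx x (erase Z q)
  end.

Lemma sat_erase (M : structure Sym) (Z : Sym -> Prop) :
  (forall s a, Z s -> ~ sat ar M a (atomR s)) ->
  forall p a, sat ar M a p <-> sat ar M a (erase Z p).
Proof.
  intros HZ p; induction p as [|s v| |p IH|p IHp q IHq|p IHp q IHq|p IHp q IHq|x p IH|x p IH];
    intros a; simpl; try (rewrite ?IH, ?IHp, ?IHq; reflexivity).
  - destruct (excluded_middle_informative (Z s)) as [Hz|Hz]; simpl; [|reflexivity].
    split; [exact (HZ s (fun i => a (v i)) Hz) | intros []].
  - now setoid_rewrite IH.
  - now setoid_rewrite IH.
Qed.

Lemma free_erase (Z : Sym -> Prop) x p : free ar x (erase Z p) -> free ar x p.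
Proof.
  induction p; simpl; intuition.
  destruct (excluded_middle_informative (Z s)); simpl in *; tauto.
Qed.

Lemma uses_erase (L Z : Sym -> Prop) p :
  uses L p -> uses (fun s => L s /\ ~ Z s) (erase Z p).
Proof.
  induction p; simpl; intuition.
  destruct (excluded_middle_informative (Z s)); simpl in *; tauto.
Qed.

Lemma T_I_canon_model (I : Sym -> Prop) p :
  T_I ar M0 n I p -> models ar (canon_model I) p.
Proof.
  intros (_ & _ & HT); apply HT.
  - intros q [_ [_ Hq]] Hu.
    apply (canon_model_agrees (U := fun s => I s \/ ar s <> n)); auto.
    intros s [Hs|Hs] [Hn _]; tauto.
  - intros l Hl HIl b; apply sat_alls; intros a [Ha _]; auto.
Qed.

(* Erasing the empty symbols [I0 \ I] turns a sentence true in [canon_model I] into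
   an [I]-sentence of [T0] that is equivalent to it modulo the axioms of [T_I]. *)
Lemma canon_model_T_I (I : Sym -> Prop) p :
  sentence ar p -> uses (Sigma' ar M0 n) p -> models ar (canon_model I) p ->
  T_I ar M0 n I p.
Proof.
  intros Hs Hu Hp; set (Z := fun s => I0 ar M0 n s /\ ~ I s).
  assert (Hs' : sentence ar (erase Z p)) by (intros x Hx; exact (Hs x (free_erase Hx))).
  assert (Hu' := uses_erase Z Hu).
  assert (HZ : forall s, Sigma' ar M0 n s /\ ~ Z s -> I0 ar M0 n s -> I s)
    by (intros s [_ HZs] HI0; apply NNPP; intros HIs; apply HZs; split; auto).
  repeat split; auto; intros M Hax Hempty a.
  assert (HMZ : forall s a, Z s -> ~ sat ar M a (atomR s)).
  { intros s a' [HI0 HIs] Hsat; exact (alls_sat (Hempty s HI0 HIs a') (fun _ _ => eq_refl) Hsat). }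
  apply (sat_erase HMZ), Hax.
  - repeat split; auto; [apply uses_all|].
    apply (canon_model_agrees HZ Hu'); intros b.
    apply (sat_erase (M := canon_model I)); auto; intros s b' [HI0 HIs] [Hb _]; auto.
  - apply (uses_mono (L := fun s => Sigma' ar M0 n s /\ ~ Z s)); auto.
    intros s [[HI0|Hn] HZs]; [left|right; exact Hn].
    apply (HZ s (conj (or_introl HI0) HZs) HI0).
Qed.

Lemma Th_canon_model (I : Sym -> Prop) :
  theq (Th ar (Sigma' ar M0 n) (canon_model I)) (T_I ar M0 n I).
Proof.
  intros p; split.
  - intros (Hs & Hu & Hp); apply canon_model_T_I; auto.
  - intros HT; pose proof HT as (Hs & Hu & _); repeat split; auto.
    apply T_I_canon_model, HT.
Qed.

Lemma T_I_of_T0 (I : Sym -> Prop) p :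
  Th ar (fun s => ar s <> n) M0 p -> T_I ar M0 n I p.
Proof.
  intros (Hs & Hu & Hp); repeat split; auto.
  - apply (uses_mono (L := fun s => ar s <> n)); auto; intros s; right; auto.
  - intros M Hax _; apply Hax; [repeat split; auto; apply uses_all|].
    apply (uses_mono (L := fun s => ar s <> n)); auto.
Qed.

Lemma T_I_nonempty (I : Sym -> Prop) (N : structure Sym) k :
  (forall p, T_I ar M0 n I p -> models ar N p) -> I0 ar M0 n k ->
  (models ar N (exs (ar k) (atomR k)) <-> I k).
Proof.
  intros HN [Hk Hne]; split.
  - intros Hex; apply NNPP; intros HIk.
    assert (Hall : models ar N (alls (ar k) (FNeg (atomR k)))).
    { apply HN; repeat split; [apply sentence_alls_neg_atomR| |].
      - rewrite uses_alls; left; split; auto.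
      - intros M _ Hempty; apply Hempty; [split|]; auto. }
    destruct (dom_ne N) as [x].
    destruct (sat_exs (Hex (fun _ => x))) as [a Ha].
    exact (alls_sat (Hall a) (fun _ _ => eq_refl) Ha).
  - intros HIk; apply HN; repeat split; [apply sentence_exs_atomR| |].
    + rewrite uses_exs; left; split; auto.
    + intros M Hax _; apply Hax; [exact Hne|].
      rewrite uses_exs; left; auto.
Qed.

Lemma T_I_nullary (I : Sym -> Prop) (N : structure Sym) s :
  1 <= n -> (forall p, T_I ar M0 n I p -> models ar N p) -> ar s = 0 ->
  (rel N s [] <-> rel M0 s []).
Proof.
  intros Hn HN Hs; set (q := FRel s (fun _ => 0)).
  assert (Hq : sentence ar q) by (intros x [i [Hi _]]; lia).
  assert (Hqu : uses (fun s' => ar s' <> n) q) by (simpl; lia).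
  destruct (deciding_sentence M0 Hq Hqu) as [p [Hp Hdec]].
  rewrite <- (models_nullary N (fun _ => 0) Hs), <- (models_nullary M0 (fun _ => 0) Hs).
  apply Hdec, HN, T_I_of_T0, Hp.
Qed.

End IndexTheories.

(** * Relativization to an [E]-class *)

Section Relativization.

Variables (Sym : Type) (ar : Sym -> nat).

Definition pairv (c x : nat) : nat -> nat := fun i => if Nat.eqb i 0 then c else x.

(* [FRel None (pairv c x)] is [E(x_c, x_x)]: quantifiers are bounded to the
   [E]-class of [x_c]. *)
Fixpoint relativize (c : nat) (p : form Sym) : form (option Sym) :=
  match p with
  | FFal => FFal
  | FRel s v => FRel (Some s) v
  | FEq x y => FEq x y
  | FNeg q => FNeg (relativize c q)
  | FAnd q r => FAnd (relativize c q) (relativize c r)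
  | FOr q r => FOr (relativize c q) (relativize c r)
  | FImp q r => FImp (relativize c q) (relativize c r)
  | FAll x q => FAll x (FImp (FRel None (pairv c x)) (relativize c q))
  | FEx x q => FEx x (FAnd (FRel None (pairv c x)) (relativize c q))
  end.

Fixpoint avoids (c : nat) (p : form Sym) : Prop :=
  match p with
  | FFal => True
  | FRel s v => forall i, i < ar s -> v i <> c
  | FEq x y => x <> c /\ y <> c
  | FNeg q => avoids c q
  | FAnd q r | FOr q r | FImp q r => avoids c q /\ avoids c r
  | FAll x q | FEx x q => x <> c /\ avoids c q
  end.

Lemma avoids_large p : exists N, forall c, N <= c -> avoids c p.
Proof.
  induction p as [|s v|x y|p IH|p IHp q IHq|p IHp q IHq|p IHp q IHq|x p IH|x p IH]; simpl;
    try (destruct IHp as [N1 H1], IHq as [N2 H2]; exists (max N1 N2);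
         intros c Hc; split; [apply H1|apply H2]; lia);
    try (destruct IH as [N1 H1]; exists (max N1 (S x)); intros c Hc; split; [lia|apply H1; lia]).
  - exists 0; auto.
  - exists (S (list_max (map v (seq 0 (ar s))))); intros c Hc i Hi.
    assert (Hvi : v i <= list_max (map v (seq 0 (ar s)))).
    { pose proof (proj1 (list_max_le (map v (seq 0 (ar s))) _) (le_n _)) as Hall.
      rewrite Forall_forall in Hall.
      apply Hall, in_map, in_seq; lia. }
    lia.
  - exists (S (max x y)); intros; lia.
  - exact IH.
Qed.

Lemma free_relativize c y p : free (arE ar) y (relativize c p) -> y = c \/ free ar y p.
Proof.
  induction p; simpl; try tauto; intros [Hx [[i [Hi Hv]]|Hf]];
    try (destruct (IHp Hf); tauto);
    unfold pairv in Hv; destruct (Nat.eqb i 0); subst; tauto.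
Qed.

Lemma uses_relativize (L : Sym -> Prop) c p : uses L p -> uses (LE L) (relativize c p).
Proof. induction p; simpl; intuition. Qed.

Lemma sat_relativize (B : structure (option Sym)) (r : dom B) (h : rel B None [r; r]) c :
  forall p, avoids c p -> forall (b : nat -> dom B) (a : nat -> dom (eclass B r h)),
  b c = r -> (forall x, x <> c -> b x = proj1_sig (a x)) ->
  (sat (arE ar) B b (relativize c p) <-> sat ar (eclass B r h) a p).
Proof.
  induction p as [|s v|x y|p IH|p IHp q IHq|p IHp q IHq|p IHp q IHq|x p IH|x p IH];
    simpl; intros Hav b a Hc Hb;
    try (rewrite (IHp (proj1 Hav) b a), (IHq (proj2 Hav) b a) by auto; reflexivity).
  - reflexivity.
  - rewrite map_map; erewrite map_ext_in; [reflexivity|].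
    intros i Hi; apply in_seq in Hi; apply Hb, Hav; lia.
  - rewrite !Hb by tauto; split; [|now intros ->].
    destruct (a x), (a y); simpl; intros ->; apply subset_eq_compat; reflexivity.
  - now rewrite (IH Hav b a).
  - destruct Hav as [Hxc Hav].
    assert (Hd : forall d, sat (arE ar) B (upd b x (proj1_sig d)) (relativize c p) <->
                           sat ar (eclass B r h) (upd a x d) p).
    { intros d; apply IH; auto; [rewrite upd_neq; auto|].
      apply (upd_pointwise (R := fun u w => u = proj1_sig w)); auto. }
    assert (HE : forall d, rel B None [upd b x d c; upd b x d x] <-> rel B None [r; d])
      by (intros d; rewrite upd_neq, upd_eq, Hc; auto; reflexivity).
    split; intros H d.
    + apply Hd, H, HE, (proj2_sig d).
    + intros HEd; apply HE in HEd; apply (Hd (exist _ d HEd)), H.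
  - destruct Hav as [Hxc Hav].
    assert (Hd : forall d, sat (arE ar) B (upd b x (proj1_sig d)) (relativize c p) <->
                           sat ar (eclass B r h) (upd a x d) p).
    { intros d; apply IH; auto; [rewrite upd_neq; auto|].
      apply (upd_pointwise (R := fun u w => u = proj1_sig w)); auto. }
    assert (HE : forall d, rel B None [upd b x d c; upd b x d x] <-> rel B None [r; d])
      by (intros d; rewrite upd_neq, upd_eq, Hc; auto; reflexivity).
    split; [intros [d [HEd H]] | intros [d H]].
    + apply HE in HEd; exists (exist _ d HEd); apply Hd, H.
    + exists (proj1_sig d); split; [apply HE, (proj2_sig d) | apply Hd, H].
Qed.

Lemma sat_relativize_sentence (B : structure (option Sym)) (r : dom B)
  (h : rel B None [r; r]) c p (b : nat -> dom B) :
  sentence ar p -> avoids c p -> b c = r ->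
  (sat (arE ar) B b (relativize c p) <-> models ar (eclass B r h) p).
Proof.
  intros Hs Hav Hc.
  rewrite (sat_ext (b := fun _ => r)), (sat_relativize (h := h) Hav (a := fun _ => exist _ r h)); auto.
  - split; [intros H a; exact (sat_sentence a Hs H) | intros H; apply H].
  - intros x Hx; destruct (free_relativize Hx) as [->|Hf]; [exact Hc | destruct (Hs x Hf)].
Qed.

Definition in_some_class (c : nat) (p : form Sym) : form (option Sym) :=
  FEx c (FAnd (FRel None (fun _ => c)) (relativize c p)).

Lemma sentence_in_some_class c p : sentence ar p -> sentence (arE ar) (in_some_class c p).
Proof.
  intros Hs y [Hy [[i [_ Hi]]|Hf]]; [congruence|].
  destruct (free_relativize Hf) as [Hyc|Hfree]; [congruence | exact (Hs y Hfree)].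
Qed.

Lemma models_in_some_class (B : structure (option Sym)) c p :
  sentence ar p -> avoids c p ->
  (models (arE ar) B (in_some_class c p) <->
   exists r (h : rel B None [r; r]), models ar (eclass B r h) p).
Proof.
  intros Hs Hav; unfold in_some_class; split.
  - destruct (dom_ne B) as [x]; intros H.
    destruct (H (fun _ => x)) as [r [Hr Hp]]; simpl in Hr; rewrite upd_eq in Hr.
    exists r, Hr; apply (sat_relativize_sentence Hr Hs Hav (b := upd (fun _ => x) c r)); auto.
    apply upd_eq.
  - intros [r [h Hm]] b; exists r; split.
    + simpl; rewrite upd_eq; exact h.
    + apply (sat_relativize_sentence h Hs Hav); auto; apply upd_eq.
Qed.

End Relativization.

(** * Classes of an [E]-combination *)

Section Combination.

Variables (Sym : Type) (ar : Sym -> nat).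

Lemma map_existT_inj (K : Type) (P : K -> Type) i (l l' : list (P i)) :
  map (existT P i) l = map (existT P i) l' -> l = l'.
Proof.
  revert l'; induction l as [|x l IH]; intros [|x' l'] E; try discriminate; auto.
  injection E as Ex El; apply inj_pairT2 in Ex; subst; f_equal; auto.
Qed.

(* The [i]-th class is a copy of [A i], except that a nullary symbol holds in the
   combination as soon as it holds in some component. *)
Lemma comb_class_elem_equiv (L : Sym -> Prop) (K : Type) (A : K -> structure Sym)
  (hK : inhabited K) i y (hz : rel (comb A hK) None [existT _ i y; existT _ i y]) :
  (forall s, L s -> ar s = 0 -> forall j, rel (A j) s [] -> rel (A i) s []) ->
  elem_equiv ar L (A i) (eclass (comb A hK) (existT _ i y) hz).
Proof.
  intros Hnull p _ Hp.
  apply (models_iso (L := L) (M := A i) (N := eclass (comb A hK) (existT _ i y) hz)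
           (h := fun x => exist (fun w => rel (comb A hK) None [existT _ i y; w])
                                (existT _ i x) eq_refl)); auto.
  - intros x x' E; apply (f_equal (@proj1_sig _ _)), inj_pairT2 in E; exact E.
  - intros [[j x] Hx]; simpl in Hx; subst j; exists x; apply subset_eq_compat; reflexivity.
  - intros s l Hs Hl; simpl; rewrite map_map; simpl; split.
    + intros Hr; exists i, l; auto.
    + intros [j [l' [E Hr]]]; destruct l as [|x l], l' as [|x' l']; try discriminate.
      * apply (Hnull s Hs (eq_sym Hl) j Hr).
      * assert (Hij : i = j) by (injection E; auto); subst j.
        apply (map_existT_inj (P := fun k => dom (A k))) in E; rewrite E; exact Hr.
Qed.

Lemma comb_realizes (L : Sym -> Prop) (K : Type) (hK : inhabited K)
  (A : K -> structure Sym) (B : structure (option Sym)) :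
  (forall s, L s -> ar s = 0 -> forall i j, rel (A i) s [] -> rel (A j) s []) ->
  elem_equiv (arE ar) (LE L) (comb A hK) B ->
  forall r h p, Th ar L (eclass B r h) p -> exists i, models ar (A i) p.
Proof.
  intros Hnull HB r h p (Hs & Hu & Hp).
  destruct (avoids_large ar p) as [c Hc]; specialize (Hc c (le_n c)).
  assert (HinB : models (arE ar) B (in_some_class c p))
    by (apply models_in_some_class; eauto).
  apply HB in HinB; [|apply sentence_in_some_class; auto | split; [exact I | now apply uses_relativize]].
  apply models_in_some_class in HinB as [[i y] [hz Hz]]; auto.
  exists i; refine (proj2 (comb_class_elem_equiv (L := L) hz _ Hs Hu) Hz).
  intros s Hs0 Hs1 j; apply (Hnull s Hs0 Hs1).
Qed.

End Combination.

(** * The closure criterion *)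

Fixpoint syms (Sym : Type) (p : form (option Sym)) : list Sym :=
  match p with
  | FRel (Some s) _ => [s]
  | FNeg q | FAll _ q | FEx _ q => syms q
  | FAnd q r | FOr q r | FImp q r => syms q ++ syms r
  | _ => []
  end.

Lemma uses_syms (Sym : Type) (p : form (option Sym)) : uses (LE (fun s => In s (syms p))) p.
Proof.
  assert (Hl : forall (l l' : list Sym) (q : form (option Sym)),
             uses (LE (fun s => In s l)) q -> uses (LE (fun s => In s (l ++ l'))) q)
    by (intros l l' q; apply uses_mono; intros [s|]; simpl; auto using in_or_app).
  assert (Hr : forall (l l' : list Sym) (q : form (option Sym)),
             uses (LE (fun s => In s l')) q -> uses (LE (fun s => In s (l ++ l'))) q)
    by (intros l l' q; apply uses_mono; intros [s|]; simpl; auto using in_or_app).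
  induction p as [| [s|] v | | | | | | |]; simpl; auto.
Qed.

(* Shifting the indices [(Ls, m)] up by one frees [(Ls, 0)] for [None]. *)
Definition insert_at (Sym : Type) (Ls : list Sym) (o : option (list Sym * nat)) : list Sym * nat :=
  match o with
  | None => (Ls, 0)
  | Some (Ls', m) => if excluded_middle_informative (Ls' = Ls) then (Ls', S m) else (Ls', m)
  end.

Lemma insert_at_fst (Sym : Type) (Ls : list Sym) k : fst (insert_at Ls (Some k)) = fst k.
Proof. destruct k as [Ls' m]; simpl; destruct excluded_middle_informative; reflexivity. Qed.

Lemma insert_at_inj (Sym : Type) (Ls : list Sym) o o' : insert_at Ls o = insert_at Ls o' -> o = o'.
Proof.
  destruct o as [[Ls1 m1]|], o' as [[Ls2 m2]|]; simpl;
    repeat destruct excluded_middle_informative; intros E; inversion E; subst;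
    congruence.
Qed.

Lemma insert_at_surj (Sym : Type) (Ls : list Sym) k : exists o, insert_at Ls o = k.
Proof.
  destruct k as [Ls' m]; destruct (excluded_middle_informative (Ls' = Ls)) as [->|Hne].
  - destruct m as [|m]; [exists None; reflexivity|].
    exists (Some (Ls, m)); simpl; destruct excluded_middle_informative; congruence.
  - exists (Some (Ls', m)); simpl; destruct excluded_middle_informative; congruence.
Qed.

Lemma map_reindex_inv (K K' D : Type) (f : K' -> K) (f_inj : forall x y, f x = f y -> x = y) k' :
  forall (l : list {x : K' & D}) (l' : list D),
  map (fun z => existT (fun _ => D) (f (projT1 z)) (projT2 z)) l = map (existT (fun _ => D) (f k')) l' ->
  l = map (existT (fun _ => D) k') l'.
Proof.
  induction l as [|[x d] l IH]; intros [|d' l'] E; try discriminate; auto.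
  injection E as Ex Ed El; apply f_inj in Ex; subst; simpl; f_equal; auto.
Qed.

Section ClosureCriterion.

Variables (Sym : Type) (ar : Sym -> nat) (M0 : structure Sym) (n : nat).

Lemma canon_model_nullary (I : Sym -> Prop) s :
  1 <= n -> ar s = 0 -> (rel (canon_model ar M0 n I) s [] <-> rel M0 s []).
Proof. intros Hn Hs; apply (T_I_nullary (ar := ar) (n := n) (I := I)); auto; apply T_I_canon_model. Qed.

Lemma comb_canon_reindex (K K' : Type) (hK : inhabited K) (hK' : inhabited K')
  (I : K -> Sym -> Prop) (I' : K' -> Sym -> Prop) (f : K' -> K) (L : Sym -> Prop) :
  (forall x y, f x = f y -> x = y) -> (forall k, exists k', f k' = k) ->
  (forall k' s, L s -> I0 ar M0 n s -> (I' k' s <-> I (f k') s)) ->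
  forall p, uses (LE L) p ->
  (models (arE ar) (comb (fun k' => canon_model ar M0 n (I' k')) hK') p <->
   models (arE ar) (comb (fun k => canon_model ar M0 n (I k)) hK) p).
Proof.
  intros f_inj f_surj HI p Hp.
  apply (models_iso (L := LE L) (M := comb (fun k' => canon_model ar M0 n (I' k')) hK')
           (N := comb (fun k => canon_model ar M0 n (I k)) hK)
           (h := fun z => existT (fun _ => dom M0) (f (projT1 z)) (projT2 z))); auto.
  - intros [k1 x1] [k2 x2] E; injection E as Ek Ex; apply f_inj in Ek; subst; reflexivity.
  - intros [k x]; destruct (f_surj k) as [k' <-]; exists (existT _ k' x); reflexivity.
  - intros [s|] l Hs Hl; simpl.
    + split.
      * intros [k' [l' [-> [HIr Hr]]]]; exists (f k'), l'.
        rewrite map_map; split; [reflexivity|]; split; auto.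
        intros HI0; apply HI; auto.
      * intros [k [l' [E [HIr Hr]]]]; destruct (f_surj k) as [k' <-].
        exists k', l'; split; [exact (map_reindex_inv f_inj E)|]; split; auto.
        intros HI0; apply HI; auto.
    + destruct l as [|x [|y [|]]]; try discriminate; simpl.
      split; [now intros -> | apply f_inj].
Qed.

Variables (TT : theory Sym -> Prop) (J : Sym -> Prop).

Lemma ClE_realizes :
  1 <= n ->
  (forall T, TT T -> exists I, index_set ar M0 n I /\ theq T (T_I ar M0 n I)) ->
  ClE ar M0 n TT (T_I ar M0 n J) ->
  forall p, T_I ar M0 n J p ->
  exists N T I, TT T /\ index_set ar M0 n I /\ theq T (T_I ar M0 n I) /\
    theq (Th ar (Sigma' ar M0 n) N) T /\ models ar N p.
Proof.
  intros Hn HTT [K [hK [A [B [HA [HB [r [h HJ]]]]]]]] p Hp.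
  assert (Hcomp : forall j, exists T I, TT T /\ index_set ar M0 n I /\
            theq T (T_I ar M0 n I) /\ theq (Th ar (Sigma' ar M0 n) (A j)) T).
  { intros j; destruct (HA j) as [T [HT HAT]], (HTT T HT) as [I [HI HTI]]; exists T, I; auto. }
  assert (Hnull : forall s, Sigma' ar M0 n s -> ar s = 0 ->
            forall i j, rel (A i) s [] -> rel (A j) s []).
  { intros s _ Hs i j Hi.
    destruct (Hcomp i) as (Ti & Ii & _ & _ & HTIi & HATi).
    destruct (Hcomp j) as (Tj & Ij & _ & _ & HTIj & HATj).
    apply (T_I_nullary Hn (fun q => theq_Th_models (theq_trans HATj HTIj)) Hs).
    apply (T_I_nullary Hn (fun q => theq_Th_models (theq_trans HATi HTIi)) Hs), Hi. }
  destruct (comb_realizes Hnull HB (proj1 (HJ p) Hp)) as [i Hi].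
  destruct (Hcomp i) as (T & I & HT & HI & HTI & HAT); exists (A i), T, I; auto.
Qed.

Lemma ClE_forward :
  1 <= n ->
  (forall T, TT T -> exists I, index_set ar M0 n I /\ theq T (T_I ar M0 n I)) ->
  ~ memT TT (T_I ar M0 n J) ->
  ClE ar M0 n TT (T_I ar M0 n J) ->
  forall J0 : list Sym, (forall k, In k J0 -> I0 ar M0 n k) ->
  infinitely_many TT (fun T => exists I, index_set ar M0 n I /\
    theq T (T_I ar M0 n I) /\ (forall k, In k J0 -> (J k <-> I k))).
Proof.
  intros Hn HTT HnotJ HClE J0 HJ0 l.
  set (Sg := Sigma' ar M0 n); set (C := canon_model ar M0 n J).
  assert (HC : theq (Th ar Sg C) (T_I ar M0 n J)) by apply Th_canon_model.
  destruct (list_choice (l := J0) (P := fun k p => Th ar Sg C p /\ forall N, models ar N p ->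
              (models ar N (exs (ar k) (atomR k)) <-> models ar C (exs (ar k) (atomR k)))))
    as [ps1 [Hdec Hps1]].
  { intros k Hk; apply deciding_sentence; [apply sentence_exs_atomR|].
    rewrite uses_exs; left; auto. }
  destruct (list_choice (l := l) (P := fun T' p => Th ar Sg C p /\ forall N,
              theq (Th ar Sg N) T' -> models ar N p -> theq (Th ar Sg C) (Th ar Sg N)))
    as [ps2 [Hsep Hps2]].
  { intros T' _; apply separating_sentence. }
  destruct (ClE_realizes Hn HTT HClE (p := bigand (ps1 ++ ps2)))
    as (N & T & I & HT & HI & HTI & HNT & HN).
  { apply HC, Th_bigand; intros p Hp; apply in_app_or in Hp as [Hp|Hp];
      [destruct (Hps1 p Hp) as (_ & _ & HCp & _) | destruct (Hps2 p Hp) as (_ & _ & HCp & _)];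
      exact HCp. }
  pose proof (models_bigand HN) as HNps.
  exists T; split; [exact HT|]; split.
  - exists I; split; [exact HI|]; split; [exact HTI|]; intros k Hk.
    destruct (Hdec k Hk) as [p [Hp [_ Hdeck]]].
    rewrite <- (T_I_nonempty (fun q => @T_I_canon_model _ _ _ _ J q) (HJ0 k Hk)).
    rewrite <- (T_I_nonempty (fun q => theq_Th_models (theq_trans HNT HTI)) (HJ0 k Hk)).
    symmetry; apply Hdeck, HNps, in_or_app; auto.
  - intros T' HT' HTT'.
    destruct (Hsep T' HT') as [p [Hp [_ HsepT']]].
    assert (HNp : models ar N p) by (apply HNps, in_or_app; auto).
    apply HnotJ; exists T; split; [exact HT|].
    exact (theq_trans (theq_sym HC) (theq_trans (HsepT' N (theq_trans HNT HTT') HNp) HNT)).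
Qed.

Lemma agreeing_index_sets :
  (forall J0 : list Sym, (forall k, In k J0 -> I0 ar M0 n k) ->
    infinitely_many TT (fun T => exists I, index_set ar M0 n I /\
      theq T (T_I ar M0 n I) /\ (forall k, In k J0 -> (J k <-> I k)))) ->
  forall Ls : list Sym, exists I, memT TT (T_I ar M0 n I) /\
    forall k, In k Ls -> I0 ar M0 n k -> (J k <-> I k).
Proof.
  intros Hinf Ls.
  set (J0 := filter (fun s => if excluded_middle_informative (I0 ar M0 n s) then true else false) Ls).
  destruct (Hinf J0) with (l := @nil (theory Sym)) as [T [HT [[I [_ [HTI Hag]]] _]]].
  - intros k Hk; apply filter_In in Hk as [_ Hk].
    destruct excluded_middle_informative; [assumption | discriminate].
  - exists I; split; [exists T; split; [exact HT | exact (theq_sym HTI)]|].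
    intros k Hk HI0; apply Hag, filter_In; split; auto.
    destruct excluded_middle_informative; tauto.
Qed.

Lemma ClE_backward :
  1 <= n ->
  (forall Ls : list Sym, exists I, memT TT (T_I ar M0 n I) /\
    forall k, In k Ls -> I0 ar M0 n k -> (J k <-> I k)) ->
  ClE ar M0 n TT (T_I ar M0 n J).
Proof.
  intros Hn Hagree; destruct (choice _ Hagree) as [IS HIS].
  set (K := (list Sym * nat)%type).
  set (I' := fun o : option K => match o with None => J | Some k => IS (fst k) end).
  exists K, (inhabits ([], 0)), (fun k : K => canon_model ar M0 n (IS (fst k))),
    (comb (fun o => canon_model ar M0 n (I' o)) (inhabits None)).
  split; [|split].
  - intros k; destruct (HIS (fst k)) as [[T [HT HTI]] _]; exists T; split; auto.
    exact (theq_trans (Th_canon_model _ _ _ _) HTI).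
  - intros p _ _; symmetry.
    apply comb_canon_reindex with (f := insert_at (syms p)) (L := fun s => In s (syms p));
      [apply insert_at_inj | apply insert_at_surj | | apply uses_syms].
    intros [k|] s Hs HI0; [cbv beta; rewrite insert_at_fst; reflexivity|].
    simpl; apply (proj2 (HIS (syms p))); auto.
  - destruct (dom_ne M0) as [x0].
    exists (existT (fun o => dom (canon_model ar M0 n (I' o))) None x0), eq_refl.
    apply (theq_trans (theq_sym (Th_canon_model _ _ _ J))), Th_elem_equiv.
    apply (comb_class_elem_equiv (A := fun o => canon_model ar M0 n (I' o)) (i := None)).
    intros s _ Hs j Hj.
    apply (canon_model_nullary J Hn Hs), (canon_model_nullary (I' j) Hn Hs), Hj.
Qed.

End ClosureCriterion.

Theorem proposition4p6 (Sym : Type) (ar : Sym -> nat) (M0 : structure Sym)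
  (n : nat) (TT : theory Sym -> Prop) (J : Sym -> Prop) :
  LU ar (T0 ar M0) ->
  1 <= n ->
  infinite_set (I0 ar M0 n) ->
  (forall T, TT T -> exists I, index_set ar M0 n I /\ theq T (T_I ar M0 n I)) ->
  infinitely_many TT (fun _ => True) ->
  index_set ar M0 n J ->
  ~ memT TT (T_I ar M0 n J) ->
  (ClE ar M0 n TT (T_I ar M0 n J) <->
   forall J0 : list Sym, (forall k, In k J0 -> I0 ar M0 n k) ->
     infinitely_many TT (fun T => exists I, index_set ar M0 n I /\
        theq T (T_I ar M0 n I) /\ (forall k, In k J0 -> (J k <-> I k)))).
Proof.
  intros _ Hn _ HTT _ _ HnotJ; split.
  - exact (ClE_forward Hn HTT HnotJ).
  - intros Hinf; exact (ClE_backward Hn (agreeing_index_sets Hinf)).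
Qed.
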